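(* Let $A$ be a unital C*-algebra, let $f\in A$ be self-adjoint, and let $\varepsilon>0$. Then there exist $n\in\mathbb N$, $\delta>0$ and self-adjoint $f_1,\dots,f_n\in A$ such that $\|f-f_i\|<\varepsilon$ for $i=1,\dots,n$, and $\frac1n(\tau(\chi_\delta(f_1))+\cdots+\tau(\chi_\delta(f_n)))<\varepsilon$ for all tracial states $\tau\in\mathrm{T}(A)$.
   Context: $\chi_\delta\colon\mathbb R\to\mathbb R$ is the continuous function equal to $1$ on $\{|t|<\delta/2\}$, $0$ on $\{|t|>\delta\}$, and linear otherwise; $\chi_\delta(f_i)$ is defined by continuous functional calculus. *)

From mathcomp Require Import all_boot all_algebra.
From mathcomp Require Import complex.
From mathcomp Require Import boolp classical_sets reals.
Import GRing.Theory Num.Theory.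
Set Implicit Arguments. Unset Strict Implicit. Unset Printing Implicit Defensive.
Local Open Scope ring_scope.

Record cstar_algebra (R : realType) := CStarAlgebra {
  cs_car :> algType R[i];
  cs_norm : cs_car -> R;
  cs_star : cs_car -> cs_car;
  cs_norm_ge0 : forall x, 0 <= cs_norm x;
  cs_norm_eq0 : forall x, cs_norm x = 0 -> x = 0;
  cs_norm_triangle : forall x y, cs_norm (x + y) <= cs_norm x + cs_norm y;
  cs_norm_scale : forall (c : R[i]) x,
      ((cs_norm (c *: x))%:C)%C = `|c| * ((cs_norm x)%:C)%C;
  cs_norm_mul : forall x y, cs_norm (x * y) <= cs_norm x * cs_norm y;
  cs_star_add : forall x y, cs_star (x + y) = cs_star x + cs_star y;
  cs_star_scale : forall (c : R[i]) x, cs_star (c *: x) = c^* *: cs_star x;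
  cs_star_mul : forall x y, cs_star (x * y) = cs_star y * cs_star x;
  cs_star_invol : forall x, cs_star (cs_star x) = x;
  cs_cstar_id : forall x, cs_norm (cs_star x * x) = cs_norm x ^+ 2;
  cs_complete : forall u : nat -> cs_car,
      (forall e : R, 0 < e -> exists N : nat, forall m n : nat,
          (N <= m)%N -> (N <= n)%N -> cs_norm (u m - u n) < e) ->
      exists l : cs_car, forall e : R, 0 < e -> exists N : nat,
          forall n : nat, (N <= n)%N -> cs_norm (u n - l) < e
}.

Section CStarDefs.
Variables (R : realType) (A : cstar_algebra R).

Definition self_adjoint (f : A) : Prop := cs_star f = f.

Definition tracial_state (tau : A -> R[i]) : Prop :=
  [/\ forall x y : A, tau (x + y) = tau x + tau y,
      forall (c : R[i]) (x : A), tau (c *: x) = c * tau x,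
      forall x : A, 0 <= tau (cs_star x * x),
      tau 1 = 1 &
      forall x y : A, tau (x * y) = tau (y * x)].

Definition peval (p : {poly R}) (f : A) : A :=
  \sum_(k < size p) ((p`_k)%:C)%C *: f ^+ k.

(* continuous functional calculus for self-adjoint f and continuous
   h : R -> R: h(f) = lim p_k(f) for real polynomials p_k -> h uniformly
   on [-||f||, ||f||] (an interval containing the spectrum of f). *)
Definition cfc (h : R -> R) (f : A) : A :=
  xget 0 [set l : A | exists p : nat -> {poly R},
    (forall e : R, 0 < e -> exists N : nat, forall k : nat, (N <= k)%N ->
        forall t : R, `|t| <= cs_norm f -> `|h t - (p k).[t]| < e) /\
    (forall e : R, 0 < e -> exists N : nat, forall k : nat, (N <= k)%N ->
        cs_norm (peval (p k) f - l) < e)].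

End CStarDefs.

Definition chi (R : realType) (delta : R) (t : R) : R :=
  if `|t| < delta / 2 then 1
  else if delta < `|t| then 0
  else (delta - `|t|) / (delta / 2).

(* Take n > 1/eps, eta = eps/n and f_i = f + i eta (i < n).  The functions
   t |-> chi_(eta/4)(t + i eta) have pairwise disjoint supports, so their sum is
   at most 1, and positivity of tau turns this into
   sum_i tau(chi_(eta/4)(f_i)) <= 1; the average is then at most 1/n < eps.  Approximating each
   chi_(eta/4)(f_i) by p_i(f_i) for a polynomial p_i reduces the claim to
   tau(q(f)) >= 0 for a polynomial q positive on an interval [alpha, beta] with
   f - alpha >= 0 and beta - f >= 0.  By Lukacs' factorization of q, and since
   1 - h has a square root when |h| < 1 (a contraction iteration), such q(f) is
   a limit of sums of squares of self-adjoint elements commuting with f, on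
   which tau is nonnegative. *)

From HB Require Import structures.
From mathcomp Require Import all_boot all_order all_algebra.
From mathcomp Require Import complex.
From mathcomp Require Import boolp classical_sets reals.
From mathcomp Require Import ring lra.
Import Order.TTheory GRing.Theory Num.Theory.
Set Implicit Arguments. Unset Strict Implicit. Unset Printing Implicit Defensive.
Local Open Scope complex_scope.
Local Open Scope ring_scope.

Lemma normcR (R : rcfType) (r : R) : `|r%:C| = `|r|%:C.
Proof. by rewrite normc_def /= expr0n addr0 sqrtr_sqr. Qed.

Lemma lec_addgt0P (R : rcfType) (z : R[i]) (a : R) :
  (forall e : R, 0 < e -> z <= (a + e)%:C) -> z <= a%:C.
Proof.
move=> le_z; have := le_z 1 ltr01; rewrite lecE /= => /andP[/eqP Imz _].
rewrite lecE /= -Imz eqxx /=; apply/ler_addgt0Pr => e e0.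
by have := le_z e e0; rewrite lecE => /andP[_].
Qed.

Section Basics.
Context {R : realType} {A : cstar_algebra R}.
Implicit Types (x y z : A) (r : R).

Lemma cs_star_nmod_morphism : nmod_morphism (@cs_star R A).
Proof.
split=> [|x y]; last exact: cs_star_add.
by apply/(addrI (cs_star 0)); rewrite -cs_star_add !addr0.
Qed.

HB.instance Definition _ :=
  GRing.isNmodMorphism.Build A A (@cs_star R A) cs_star_nmod_morphism.

Definition real_alg : {rmorphism R -> A} := in_alg A \o real_complex R.

Lemma real_algE r : real_alg r = r%:C%:A.
Proof. by []. Qed.

Lemma real_alg_comm x : commr_rmorph real_alg x.
Proof. by move=> r; rewrite /GRing.comm comm_alg. Qed.

Lemma cs_normZr r x : cs_norm (r%:C *: x) = `|r| * cs_norm x.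
Proof. by apply: complexI; rewrite cs_norm_scale normcR rmorphM. Qed.

Lemma cs_norm0 : cs_norm (0 : A) = 0.
Proof. by have := cs_normZr 0 0; rewrite scale0r normr0 mul0r. Qed.

Lemma cs_norm_eq0P x : (cs_norm x = 0) <-> (x = 0).
Proof. by split=> [/cs_norm_eq0|->] //; rewrite cs_norm0. Qed.

Lemma cs_normN x : cs_norm (- x) = cs_norm x.
Proof.
by have := cs_normZr (-1) x; rewrite rmorphN1 scaleN1r normrN1 mul1r.
Qed.

Lemma cs_distC x y : cs_norm (x - y) = cs_norm (y - x).
Proof. by rewrite -cs_normN opprB. Qed.

Lemma cs_dist_triangle x y z :
  cs_norm (x - z) <= cs_norm (x - y) + cs_norm (y - z).
Proof. by have := cs_norm_triangle (x - y) (y - z); rewrite addrA subrK. Qed.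

Lemma cs_norm_mulB x y x' y' :
  cs_norm (x * y - x' * y') <= cs_norm x * cs_norm (y - y') + cs_norm (x - x') * cs_norm y'.
Proof.
have -> : x * y - x' * y' = x * (y - y') + (x - x') * y'.
  by rewrite mulrBr mulrBl addrA subrK.
by apply: le_trans (cs_norm_triangle _ _) _; apply: lerD; apply: cs_norm_mul.
Qed.

Lemma cs_star_real_scale r x : cs_star (r%:C *: x) = r%:C *: cs_star x.
Proof. by rewrite cs_star_scale; congr (_ *: _); exact: conjc_real. Qed.

Lemma cs_star1 : cs_star (1 : A) = 1.
Proof.
have := cs_star_mul (cs_star 1) (1 : A); rewrite !mulr1 cs_star_invol => h.
by rewrite [RHS]h mulr1.
Qed.

Lemma cs_star_real_alg r : cs_star (real_alg r) = real_alg r.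
Proof. by rewrite real_algE cs_star_real_scale cs_star1. Qed.

Lemma cs_norm1 : cs_norm (1 : A) <= 1.
Proof.
have := cs_cstar_id (1 : A); rewrite cs_star1 mulr1 => h.
have [->|nz] := eqVneq (cs_norm (1 : A)) 0; first exact: ler01.
suff -> : cs_norm (1 : A) = 1 by [].
by apply: (mulfI nz); rewrite mulr1 -expr2 -h.
Qed.

Lemma cs_norm_real_alg r : cs_norm (real_alg r) <= `|r|.
Proof.
rewrite real_algE cs_normZr -[leRHS]mulr1.
by apply: ler_wpM2l; [exact: normr_ge0 | exact: cs_norm1].
Qed.

Lemma cs_norm_star x : cs_norm (cs_star x) = cs_norm x.
Proof.
suff le_star y : cs_norm y <= cs_norm (cs_star y).
  by apply/eqP; rewrite eq_le le_star -{2}(cs_star_invol x) le_star.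
have [->|nz] := eqVneq (cs_norm y) 0; first exact: cs_norm_ge0.
have y_gt0 : 0 < cs_norm y by rewrite lt_def nz cs_norm_ge0.
rewrite -(ler_pM2r y_gt0) -expr2 -cs_cstar_id; exact: cs_norm_mul.
Qed.

End Basics.

Lemma bernoulli_ineq (R : realFieldType) (s : R) (n : nat) :
  0 <= s -> 1 + n%:R * s <= (1 + s) ^+ n.
Proof.
move=> s_ge0; elim: n => [|n IHn]; first by rewrite mul0r addr0 expr0.
have : 0 <= (1 + s) ^+ n by apply: exprn_ge0; lra.
have : 0 <= n%:R * s by apply: mulr_ge0.
rewrite exprS -natr1; nra.
Qed.

Lemma exists_expr_lt (R : archiRealFieldType) (r e : R) :
  0 <= r -> r < 1 -> 0 < e -> exists n, r ^+ n < e.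
Proof.
move=> r_ge0 r_lt1 e_gt0.
have [->|r_neq0] := eqVneq r 0; first by exists 1%N; rewrite expr1.
have r_gt0 : 0 < r by rewrite lt_def r_neq0.
pose s := r^-1 - 1.
have s_gt0 : 0 < s by rewrite subr_gt0 invf_gt1.
have M_ge0 : 0 <= e^-1 / s by apply: divr_ge0; rewrite ?invr_ge0 ltW.
exists (Num.Def.archi_bound (e^-1 / s)).
move: (archi_boundP M_ge0); set n := Num.Def.archi_bound _ => lt_n.
have lt_ns : e^-1 < n%:R * s by rewrite -ltr_pdivrMr.
have := bernoulli_ineq n (ltW s_gt0).
have -> : 1 + s = r^-1 by rewrite addrC subrK.
rewrite exprVn => le_n.
have rn_gt0 : 0 < r ^+ n by apply: exprn_gt0.
by rewrite -ltf_pV2 ?posrE //; lra.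
Qed.

Section Convergence.
Context {R : realType} {A : cstar_algebra R}.
Implicit Types (u v : nat -> A) (a b l : A).

Definition cs_cvg u l := forall e : R, 0 < e ->
  exists M, forall n, (M <= n)%N -> cs_norm (u n - l) < e.

Lemma cs_cvg_unique u l l' : cs_cvg u l -> cs_cvg u l' -> l = l'.
Proof.
move=> ul ul'; apply/subr0_eq/cs_norm_eq0P/eqP.
rewrite eq_le cs_norm_ge0 andbT; apply/ler_addgt0Pr => e e_gt0.
have e2_gt0 : 0 < e / 2 by lra.
have [M1 HM1] := ul _ e2_gt0; have [M2 HM2] := ul' _ e2_gt0.
pose n := maxn M1 M2.
have := HM1 n (leq_maxl _ _); have := HM2 n (leq_maxr _ _).
have := cs_dist_triangle l (u n) l'; rewrite (cs_distC l (u n)); lra.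
Qed.

Lemma cs_cvg_cst l : cs_cvg (fun=> l) l.
Proof. by move=> e e_gt0; exists 0%N => n _; rewrite subrr cs_norm0. Qed.

Lemma cs_cvgS u l : cs_cvg u l -> cs_cvg (fun n => u n.+1) l.
Proof. by move=> ul e /ul[M HM]; exists M => n le_Mn; apply/HM/leqW. Qed.

Lemma cs_cvg_star u l : cs_cvg u l -> cs_cvg (fun n => cs_star (u n)) (cs_star l).
Proof. by move=> ul e /ul[M HM]; exists M => n /HM; rewrite -raddfB cs_norm_star. Qed.

Lemma cs_cvgD u v a b :
  cs_cvg u a -> cs_cvg v b -> cs_cvg (fun n => u n + v n) (a + b).
Proof.
move=> ua vb e e_gt0; have e2_gt0 : 0 < e / 2 by lra.
have [M1 HM1] := ua _ e2_gt0; have [M2 HM2] := vb _ e2_gt0.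
exists (maxn M1 M2) => n; rewrite geq_max => /andP[/HM1 lt1 /HM2 lt2].
rewrite opprD addrACA; apply: le_lt_trans (cs_norm_triangle _ _) _; lra.
Qed.

Lemma cs_cvgZr (r : R) u a :
  cs_cvg u a -> cs_cvg (fun n => r%:C *: u n) (r%:C *: a).
Proof.
move=> ua e e_gt0; have r1_gt0 : 0 < `|r| + 1 by rewrite ltr_wpDl.
have [M HM] := ua _ (divr_gt0 e_gt0 r1_gt0).
exists M => n /HM; rewrite -scalerBr cs_normZr ltr_pdivlMr // => lt_e.
apply: le_lt_trans lt_e; rewrite mulrC; apply: ler_wpM2l; [exact: cs_norm_ge0 | lra].
Qed.

Lemma cs_cvgM u v a b :
  cs_cvg u a -> cs_cvg v b -> cs_cvg (fun n => u n * v n) (a * b).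
Proof.
move=> ua vb e e_gt0.
pose K := cs_norm a + cs_norm b + 2.
have K_gt0 : 0 < K by rewrite /K; have := cs_norm_ge0 a; have := cs_norm_ge0 b; lra.
pose d := Num.min 1 (e / K).
have d_gt0 : 0 < d by rewrite lt_min ltr01 divr_gt0.
have [M1 HM1] := ua _ d_gt0; have [M2 HM2] := vb _ d_gt0.
exists (maxn M1 M2) => n; rewrite geq_max => /andP[/HM1 lt_u /HM2 lt_v].
apply: le_lt_trans (cs_norm_mulB _ _ _ _) _.
have d_le1 : d <= 1 by rewrite /d ge_min lexx.
have dK : d * K <= e by rewrite -ler_pdivlMr // /d ge_min lexx orbT.
have le_u : cs_norm (u n) <= cs_norm a + 1.
  by have := cs_dist_triangle (u n) a 0; rewrite !subr0; lra.
have := cs_norm_ge0 (u n); have := cs_norm_ge0 (v n - b).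
have := cs_norm_ge0 (u n - a); have := cs_norm_ge0 b; have := cs_norm_ge0 a.
rewrite /K in dK; nra.
Qed.

Lemma cs_cvg_self_adjoint u l :
  cs_cvg u l -> (forall k, self_adjoint (u k)) -> self_adjoint l.
Proof.
move=> ul sa_u; apply: cs_cvg_unique (cs_cvg_star ul) _.
by under eq_fun do rewrite sa_u.
Qed.

Lemma cs_cvg_geometric u (r : R) : 0 <= r -> r < 1 ->
  (forall k, cs_norm (u k.+1 - u k) <= r ^+ k) -> exists l, cs_cvg u l.
Proof.
move=> r_ge0 r_lt1 step; apply: cs_complete => e e_gt0.
have tele n j : cs_norm (u (n + j)%N - u n) <= (r ^+ n - r ^+ (n + j)) / (1 - r).
  elim: j => [|j IHj]; first by rewrite addn0 !subrr cs_norm0 mul0r.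
  apply: le_trans (cs_dist_triangle _ (u (n + j)%N) _) _; rewrite addnS.
  have -> : (r ^+ n - r ^+ (n + j).+1) / (1 - r)
          = r ^+ (n + j) + (r ^+ n - r ^+ (n + j)) / (1 - r).
    by rewrite exprS; field; lra.
  exact: lerD.
have [M ltM] : exists M, r ^+ M < e * (1 - r) / 2.
  by apply: exists_expr_lt => //; apply: divr_gt0 => //; apply: mulr_gt0; lra.
have near_M p : (M <= p)%N -> cs_norm (u p - u M) <= r ^+ M / (1 - r).
  move=> le_Mp; rewrite -(subnKC le_Mp); apply: le_trans (tele _ _) _.
  apply: ler_wpM2r; first by rewrite invr_ge0 subr_ge0 ltW.
  by rewrite gerBl exprn_ge0.
exists M => m n /near_M le_m /near_M le_n.
apply: le_lt_trans (cs_dist_triangle _ (u M) _) _; rewrite (cs_distC (u M)).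
have : r ^+ M / (1 - r) < e / 2 by rewrite ltr_pdivrMr; lra.
lra.
Qed.

End Convergence.

Section SquareRoot.
Context {R : realType} {A : cstar_algebra R}.
Variables (h : A) (rho : R).
Hypotheses (sa_h : self_adjoint h) (le_h : cs_norm h <= rho) (rho_lt1 : rho < 1).

(* [1 - z] is a square root of [1 - h] iff [z] is a fixed point of
   [z |-> (h + z ^+ 2) / 2], a contraction of ratio [r] on the ball of radius [r]. *)
Fixpoint sqrt_iter k : A :=
  if k is k'.+1 then 2^-1%:C *: (h + sqrt_iter k' * sqrt_iter k') else 0.

Local Notation r := ((1 + rho) / 2).

Let rho_ge0 : 0 <= rho.
Proof. exact: le_trans (cs_norm_ge0 h) le_h. Qed.

Let norm_half (x : A) : cs_norm (2^-1%:C *: x) = cs_norm x / 2.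
Proof. by rewrite cs_normZr ger0_norm ?invr_ge0 ?ler0n // mulrC. Qed.

Lemma sqrt_iter_norm k : cs_norm (sqrt_iter k) <= r.
Proof.
have rho0 := rho_ge0.
elim: k => [|k IHk] /=; first by rewrite cs_norm0; lra.
have le_sq : cs_norm (sqrt_iter k) * cs_norm (sqrt_iter k) <= r * r.
  by apply: ler_pM; rewrite ?cs_norm_ge0 ?IHk.
have le_r : rho + r * r <= 2 * r.
  have : 0 <= (1 - rho) * (rho + 3) by apply: mulr_ge0; move: rho_lt1; lra.
  nra.
rewrite norm_half; have := cs_norm_triangle h (sqrt_iter k * sqrt_iter k).
have := cs_norm_mul (sqrt_iter k) (sqrt_iter k).
move: le_h le_sq le_r; set s := _ * cs_norm _; set rr := r * r; lra.
Qed.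

Lemma sqrt_iter_step k : cs_norm (sqrt_iter k.+1 - sqrt_iter k) <= r ^+ k.
Proof.
have r_ge0 : 0 <= r by have := rho_ge0; lra.
elim: k => [|k IHk].
  by rewrite /= subr0 mulr0 addr0 norm_half expr0; move: le_h rho_lt1; lra.
rewrite [sqrt_iter k.+2]/= [sqrt_iter k.+1 in X in _ - X]/= -scalerBr norm_half.
rewrite opprD addrACA subrr add0r exprS.
set z1 := sqrt_iter k.+1; set z0 := sqrt_iter k; set d := cs_norm (z1 - z0).
have le_z1 : cs_norm z1 * d <= r * d.
  by apply: ler_wpM2r; [exact: cs_norm_ge0 | exact: sqrt_iter_norm].
have le_z0 : d * cs_norm z0 <= d * r.
  by apply: ler_wpM2l; [exact: cs_norm_ge0 | exact: sqrt_iter_norm].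
have le_d : r * d <= r * r ^+ k by exact: ler_wpM2l.
have := cs_norm_mulB z1 z1 z0 z0; rewrite -/d; lra.
Qed.

Lemma sqrt_iter_self_adjoint k : self_adjoint (sqrt_iter k).
Proof.
rewrite /self_adjoint; elim: k => [|k IHk] /=; first exact: raddf0.
by rewrite cs_star_real_scale cs_star_add cs_star_mul IHk sa_h.
Qed.

Lemma sqrt_iter_comm w k : w * h = h * w -> w * sqrt_iter k = sqrt_iter k * w.
Proof.
move=> hw; elim: k => [|k IHk] /=; first by rewrite mulr0 mul0r.
rewrite -scalerAr -scalerAl mulrDr mulrDl hw.
by rewrite mulrA IHk -mulrA IHk mulrA.
Qed.

Lemma cs_sqrt_one_sub : exists y : A, [/\ self_adjoint y, y * y = 1 - h &
  forall w, w * h = h * w -> w * y = y * w].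
Proof.
have [l lim_l] : exists l, cs_cvg sqrt_iter l.
  by apply: (cs_cvg_geometric _ _ sqrt_iter_step); move: rho_ge0 rho_lt1; lra.
have fix_l : l + l = h + l * l.
  have l_fix : l = 2^-1%:C *: (h + l * l).
    apply: cs_cvg_unique (cs_cvgS lim_l) _.
    exact/cs_cvgZr/cs_cvgD/cs_cvgM/lim_l/lim_l/cs_cvg_cst.
  rewrite {1 2}l_fix -scalerDl -rmorphD.
  have -> : 2^-1 + 2^-1 = 1 :> R by lra.
  by rewrite rmorph1 scale1r.
exists (1 - l); split.
- rewrite /self_adjoint raddfB /= cs_star1.
  by rewrite (cs_cvg_self_adjoint lim_l sqrt_iter_self_adjoint).
- by rewrite mulrBl !mulrBr !mul1r mulr1 -addrA -opprD addrA fix_l addrK.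
- move=> w hw; rewrite mulrBr mulrBl mulr1 mul1r; congr (_ - _).
  apply: cs_cvg_unique (cs_cvgM (cs_cvg_cst w) lim_l) _.
  under eq_fun do rewrite sqrt_iter_comm //.
  exact: cs_cvgM lim_l (cs_cvg_cst w).
Qed.

End SquareRoot.

Section PolyEval.
Context {R : realType} {A : cstar_algebra R}.
Implicit Types (p q : {poly R}) (x : A).

Lemma peval_horner p x : peval p x = horner_morph (real_alg_comm x) p.
Proof.
rewrite /horner_morph (horner_coef_wide _ (size_poly _ _)) /peval.
by apply: eq_bigr => i _; rewrite coef_map /= mulr_algl.
Qed.

Lemma pevalC c x : peval c%:P x = real_alg c.
Proof. by rewrite peval_horner horner_morphC. Qed.

Lemma pevalX x : peval 'X x = x.
Proof. by rewrite peval_horner horner_morphX. Qed.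

Lemma pevalD p q x : peval (p + q) x = peval p x + peval q x.
Proof. by rewrite !peval_horner rmorphD. Qed.

Lemma pevalB p q x : peval (p - q) x = peval p x - peval q x.
Proof. by rewrite !peval_horner rmorphB. Qed.

Lemma pevalM p q x : peval (p * q) x = peval p x * peval q x.
Proof. by rewrite !peval_horner rmorphM. Qed.

Lemma peval_sum (I : Type) (s : seq I) (F : I -> {poly R}) x :
  peval (\sum_(i <- s) F i) x = \sum_(i <- s) peval (F i) x.
Proof. by rewrite peval_horner rmorph_sum; apply: eq_bigr => i _; rewrite peval_horner. Qed.

Lemma peval_shift p c x : peval (p \Po ('X + c%:P)) x = peval p (x + real_alg c).
Proof.
elim/poly_ind: p => [|p d IHp]; first by rewrite comp_poly0 !peval_horner !rmorph0.
rewrite comp_polyD comp_polyM comp_polyX comp_polyC !pevalD !pevalM IHp.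
by rewrite !pevalX !pevalC pevalD pevalX pevalC.
Qed.

Lemma peval_commr p x : peval p x * x = x * peval p x.
Proof. by rewrite -{2}(pevalX x) -pevalM mulrC pevalM pevalX. Qed.

Lemma peval_self_adjoint p x : self_adjoint x -> self_adjoint (peval p x).
Proof.
rewrite /self_adjoint => sa_x; elim/poly_ind: p => [|p c IHp].
  by rewrite peval_horner rmorph0 raddf0.
rewrite pevalD pevalM pevalX pevalC cs_star_add cs_star_mul cs_star_real_alg.
by rewrite IHp sa_x peval_commr.
Qed.

End PolyEval.

Section Bicommutant.
Context {R : realType} {A : cstar_algebra R}.
Variable f : A.
Implicit Types (x y : A).

(* Stands in for the C*-algebra generated by [f]: it is commutative and
   contains the square roots built by [cs_sqrt_one_sub]. *)
Definition bicomm x := forall w : A, w * f = f * w -> x * w = w * x.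

Lemma bicomm_id : bicomm f.
Proof. by move=> w ->. Qed.

Lemma bicomm_real_alg r : bicomm (real_alg r).
Proof. by move=> w _; apply: comm_alg. Qed.

Lemma bicomm1 : bicomm 1.
Proof. by move=> w _; rewrite mul1r mulr1. Qed.

Lemma bicomm0 : bicomm 0.
Proof. by move=> w _; rewrite mul0r mulr0. Qed.

Lemma bicommD x y : bicomm x -> bicomm y -> bicomm (x + y).
Proof. by move=> bx by_ w fw; rewrite mulrDl mulrDr bx ?by_. Qed.

Lemma bicommN x : bicomm x -> bicomm (- x).
Proof. by move=> bx w fw; rewrite mulNr mulrN bx. Qed.

Lemma bicommB x y : bicomm x -> bicomm y -> bicomm (x - y).
Proof. by move=> bx by_; apply/bicommD/bicommN. Qed.

Lemma bicommM x y : bicomm x -> bicomm y -> bicomm (x * y).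
Proof. by move=> bx by_ w fw; rewrite -mulrA by_ // !mulrA bx. Qed.

Lemma bicommZ c x : bicomm x -> bicomm (c *: x).
Proof. by move=> bx w fw; rewrite -scalerAl -scalerAr bx. Qed.

Lemma bicomm_comm x y : bicomm x -> bicomm y -> x * y = y * x.
Proof. by move=> bx by_; apply/bx/by_. Qed.

Lemma bicomm_sqrt_one_sub h (rho : R) :
  bicomm h -> self_adjoint h -> cs_norm h <= rho -> rho < 1 ->
  exists y, [/\ bicomm y, self_adjoint y & y * y = 1 - h].
Proof.
move=> bh sa_h le_h rho_lt1; have [y [sa_y yy comm_y]] := cs_sqrt_one_sub sa_h le_h rho_lt1.
by exists y; split=> // w fw; apply/esym/comm_y/esym/bh.
Qed.

Definition sos x := exists s : seq A,
  (forall y, y \in s -> bicomm y /\ self_adjoint y) /\ x = \sum_(y <- s) y * y.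

Lemma sos_sq y : bicomm y -> self_adjoint y -> sos (y * y).
Proof.
by move=> by_ sa_y; exists [:: y]; rewrite big_seq1; split=> // z /[1!inE] /eqP->.
Qed.

Lemma sosD x y : sos x -> sos y -> sos (x + y).
Proof.
move=> [s [Hs ->]] [t [Ht ->]]; exists (s ++ t); rewrite big_cat; split=> //.
by move=> z; rewrite mem_cat => /orP[/Hs|/Ht].
Qed.

Lemma sos_bicomm x : sos x -> bicomm x.
Proof.
move=> [s [Hs ->]]; rewrite big_seq; apply: big_ind => [||y /Hs[by_ _]].
- exact: bicomm0.
- exact: bicommD.
- exact: bicommM.
Qed.

Lemma sos_self_adjoint x : sos x -> self_adjoint x.
Proof.
move=> [s [Hs ->]]; rewrite big_seq; apply: big_ind => [|u v|y /Hs[_ sa_y]].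
- exact: raddf0.
- by rewrite /self_adjoint cs_star_add => -> ->.
- by rewrite /self_adjoint cs_star_mul sa_y.
Qed.

Lemma sosM x y : sos x -> sos y -> sos (x * y).
Proof.
move=> [s [Hs ->]] [t [Ht ->]]; rewrite mulr_suml.
elim: s Hs => [|a s IHs] Hs; first by exists [::]; rewrite !big_nil.
have [ba sa_a] := Hs a (mem_head _ _).
rewrite big_cons; apply: sosD; last by apply: IHs => z zs; apply/Hs/mem_behead.
exists [seq a * b | b <- t]; split.
  move=> _ /mapP[b /Ht[bb sa_b] ->]; split; first exact: bicommM.
  by rewrite /self_adjoint cs_star_mul sa_a sa_b (bicomm_comm bb ba).
rewrite big_map mulr_sumr big_seq [RHS]big_seq; apply: eq_bigr => b /Ht[bb _].
by rewrite [RHS]mulrA -(mulrA a b a) (bicomm_comm bb ba) !mulrA.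
Qed.

Lemma sosZ (c : R) x : 0 <= c -> sos x -> sos (c%:C *: x).
Proof.
move=> c_ge0 [s [Hs ->]]; exists [seq (Num.sqrt c)%:C *: y | y <- s]; split.
  move=> _ /mapP[y /Hs[by_ sa_y] ->]; split; first exact: bicommZ.
  by rewrite /self_adjoint cs_star_real_scale sa_y.
rewrite big_map scaler_sumr; apply: eq_bigr => y _.
by rewrite -scalerAl -scalerAr scalerA -rmorphM -[Num.sqrt c * _]expr2 sqr_sqrtr.
Qed.

Lemma sos_real_alg (c : R) : 0 <= c -> sos (real_alg c).
Proof.
move=> c_ge0; rewrite real_algE; apply: sosZ c_ge0 _.
by rewrite -[1]mulr1; apply: sos_sq; [exact: bicomm1 | exact: cs_star1].
Qed.

(* [pos f x] plays the role of [x >= 0] in the C*-algebra generated by [f]. *)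
Definition pos x := [/\ bicomm x, self_adjoint x &
  forall e : R, 0 < e -> exists2 x', sos x' & cs_norm (x - x') < e].

Lemma pos_sos x : sos x -> pos x.
Proof.
move=> sx; split; [exact: sos_bicomm | exact: sos_self_adjoint |].
by move=> e e_gt0; exists x; rewrite // subrr cs_norm0.
Qed.

Lemma pos_real_alg (c : R) : 0 <= c -> pos (real_alg c).
Proof. by move=> c_ge0; apply/pos_sos/sos_real_alg. Qed.

Lemma posD x y : pos x -> pos y -> pos (x + y).
Proof.
move=> [bx sa_x appr_x] [by_ sa_y appr_y]; split; first exact: bicommD.
  by rewrite /self_adjoint cs_star_add sa_x sa_y.
move=> e e_gt0; have e2_gt0 : 0 < e / 2 by lra.
have [x' sx' lt_x] := appr_x _ e2_gt0; have [y' sy' lt_y] := appr_y _ e2_gt0.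
exists (x' + y'); first exact: sosD.
rewrite opprD addrACA; apply: le_lt_trans (cs_norm_triangle _ _) _; lra.
Qed.

Lemma posM x y : pos x -> pos y -> pos (x * y).
Proof.
move=> [bx sa_x appr_x] [by_ sa_y appr_y]; split; first exact: bicommM.
  by rewrite /self_adjoint cs_star_mul sa_x sa_y (bicomm_comm by_ bx).
move=> e e_gt0.
pose K := cs_norm x + cs_norm y + 2.
have K_gt0 : 0 < K by rewrite /K; have := cs_norm_ge0 x; have := cs_norm_ge0 y; lra.
pose d := Num.min 1 (e / K).
have d_gt0 : 0 < d by rewrite lt_min ltr01 divr_gt0.
have d_le1 : d <= 1 by rewrite /d ge_min lexx.
have dK : d * K <= e by rewrite -ler_pdivlMr // /d ge_min lexx orbT.
have [x' sx' lt_x] := appr_x _ d_gt0; have [y' sy' lt_y] := appr_y _ d_gt0.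
exists (x' * y'); first exact: sosM.
apply: le_lt_trans (cs_norm_mulB _ _ _ _) _.
have le_y' : cs_norm y' <= cs_norm y + 1.
  by have := cs_dist_triangle y' y 0; rewrite !subr0 cs_distC; lra.
have := cs_norm_ge0 x; have := cs_norm_ge0 y'; have := cs_norm_ge0 (x - x').
have := cs_norm_ge0 (y - y'); rewrite /K in dK; nra.
Qed.

Lemma pos_sub_norm h (a : R) :
  bicomm h -> self_adjoint h -> cs_norm h <= a -> pos (real_alg a - h).
Proof.
move=> bh sa_h le_h; have a_ge0 : 0 <= a := le_trans (cs_norm_ge0 h) le_h.
split; first by apply/bicommB/bh/bicomm_real_alg.
  by rewrite /self_adjoint raddfB /= cs_star_real_alg sa_h.
move=> e e_gt0; pose a' := a + e / 2.
have a'_gt0 : 0 < a' by rewrite /a'; lra.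
pose h' := a'^-1%:C *: h.
have le_h' : cs_norm h' <= a / a'.
  rewrite cs_normZr ger0_norm ?invr_ge0 ?(ltW a'_gt0) // mulrC.
  by apply: ler_wpM2r; rewrite ?invr_ge0 ?(ltW a'_gt0).
have [y [by_ sa_y yy]] : exists y, [/\ bicomm y, self_adjoint y & y * y = 1 - h'].
  apply: bicomm_sqrt_one_sub le_h' _; first exact: bicommZ.
    by rewrite /self_adjoint cs_star_real_scale sa_h.
  by rewrite ltr_pdivrMr // mul1r /a'; lra.
exists (real_alg a' - h).
  have -> : real_alg a' - h = a'%:C *: (y * y).
    by rewrite yy scalerBr scalerA -rmorphM mulfV ?gt_eqF // rmorph1 scale1r.
  by apply: sosZ (ltW a'_gt0) _; apply: sos_sq.
rewrite opprB addrA subrK -rmorphB; apply: le_lt_trans (cs_norm_real_alg _) _.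
by rewrite /a' ler0_norm; lra.
Qed.

Lemma pos_add_norm h (a : R) :
  bicomm h -> self_adjoint h -> cs_norm h <= a -> pos (real_alg a + h).
Proof.
move=> bh sa_h le_h; rewrite -[h]opprK; apply: pos_sub_norm; rewrite ?cs_normN //.
  exact: bicommN.
by rewrite /self_adjoint raddfN /= sa_h.
Qed.

End Bicommutant.

Lemma size_sqr_XsubC_addC (R : idomainType) (a c : R) :
  size (('X - a%:P) ^+ 2 + c%:P) = 3%N.
Proof.
rewrite size_polyDl size_exp_XsubC //.
exact: leq_ltn_trans (size_polyC_leq1 _) _.
Qed.

Lemma rootfree_quadratic_factor (R : rcfType) (q : {poly R}) :
  (forall r, ~~ root q r) -> (1 < size q)%N ->
  exists a b (d : {poly R}), b != 0 /\ q = d * (('X - a%:P) ^+ 2 + (b ^+ 2)%:P).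
Proof.
move=> no_root size_q; pose rc := real_complex R.
have [z qz] : exists z, root (map_poly rc q) z.
  by apply/closed_rootP; rewrite size_map_poly; case: (size q) size_q => [|[]].
pose a := complex.Re z; pose b := complex.Im z.
have zE : z = a%:C + 'i * b%:C by rewrite /a /b -complexE.
have b_neq0 : b != 0.
  apply: contraNneq (no_root a) => b0; apply/rootP/complexI.
  by move: qz; rewrite zE b0 mulr0 addr0 -horner_map => /rootP ->.
pose m : {poly R} := ('X - a%:P) ^+ 2 + (b ^+ 2)%:P.
have mz : (map_poly rc m).[z] = 0.
  rewrite rmorphD rmorphXn rmorphB /= map_polyX !map_polyC !hornerE /=.
  by rewrite zE addrAC subrr add0r exprMn sqr_i rmorphXn mulN1r addNr.
have size_m : size m = 3%N by apply: size_sqr_XsubC_addC.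
pose r := q %% m.
have size_r : (size r <= 2)%N by rewrite -ltnS -size_m ltn_modp -size_poly_eq0 size_m.
have rz : (map_poly rc r).[z] = 0.
  move/rootP: qz; rewrite [q](divp_eq q m) rmorphD rmorphM hornerD hornerM mz.
  by rewrite mulr0 add0r.
rewrite (horner_coef_wide _ (leq_trans (eq_leq (size_map_poly _ _)) size_r)) in rz.
rewrite !big_ord_recl big_ord0 addr0 !coef_map /= expr0 mulr1 expr1 zE in rz.
have cE u v : u%:C + 'i * v%:C = (u +i* v) by rewrite [RHS]complexE.
move: rz; rewrite mulrDr addrA mulrCA -!rmorphM -rmorphD cE => -[r0_eq r1_eq].
have r1_0 : r`_1 = 0.
  by move/eqP: r1_eq; rewrite mulf_eq0 (negbTE b_neq0) orbF => /eqP.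
have r_0 : r = 0.
  apply/polyP => -[|[|i]]; rewrite coef0 //.
    have r0_eq' : r`_0 + r`_1 * a = 0 := r0_eq.
    by move: r0_eq'; rewrite r1_0 mul0r addr0.
  by rewrite nth_default //; apply: leq_trans size_r _.
by exists a, b, (q %/ m); split; rewrite // [LHS](divp_eq q m) -/r r_0 addr0.
Qed.

Section PosPeval.
Context {R : realType} {A : cstar_algebra R}.
Variables (f : A) (alpha beta : R).
Hypotheses (sa_f : self_adjoint f) (le_ab : alpha <= beta)
  (pos_fa : pos f (f - real_alg alpha)) (pos_bf : pos f (real_alg beta - f)).
Implicit Types (q : {poly R}) (r : R).

Let pos_XsubC r : r <= alpha -> pos f (peval ('X - r%:P) f).
Proof.
move=> le_ra; rewrite pevalB pevalX pevalC.
have -> : f - real_alg r = (f - real_alg alpha) + real_alg (alpha - r).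
  by rewrite rmorphB addrA subrK.
by apply: posD pos_fa _; apply: pos_real_alg; rewrite subr_ge0.
Qed.

Let pos_CsubX r : beta <= r -> pos f (peval (r%:P - 'X) f).
Proof.
move=> le_br; rewrite pevalB pevalX pevalC.
have -> : real_alg r - f = (real_alg beta - f) + real_alg (r - beta).
  by rewrite rmorphB [RHS]addrC [RHS]addrA subrK.
by apply: posD pos_bf _; apply: pos_real_alg; rewrite subr_ge0.
Qed.

Let pos_sqr_addC a b : pos f (peval (('X - a%:P) ^+ 2 + (b ^+ 2)%:P) f).
Proof.
rewrite pevalD pevalC expr2 pevalM pevalB pevalX pevalC.
apply: posD; last by apply: pos_real_alg; apply: sqr_ge0.
apply/pos_sos/sos_sq; first by apply/bicommB/bicomm_real_alg/bicomm_id.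
by rewrite /self_adjoint raddfB /= sa_f cs_star_real_alg.
Qed.

Local Notation positive_on q := (forall t, alpha <= t <= beta -> 0 < q.[t]).

Let in_ab : alpha <= alpha <= beta.
Proof. by rewrite lexx le_ab. Qed.

Let positive_on_neq0 q : positive_on q -> q != 0.
Proof. by move=> q_gt0; apply: contraTneq (q_gt0 _ in_ab) => ->; rewrite horner0 ltxx. Qed.

Let pos_peval_root n q r :
  (forall q', (size q' <= n)%N -> positive_on q' -> pos f (peval q' f)) ->
  (size q <= n.+1)%N -> root q r -> positive_on q -> pos f (peval q f).
Proof.
move=> IHn size_q qr q_gt0; have [q1 qE] := factor_theorem q r qr.
have size_q1 : (size q1 <= n)%N.
  move: size_q; rewrite qE size_Mmonic ?monicXsubC ?size_XsubC ?addn2 //.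
  by apply: contra_neq (positive_on_neq0 q_gt0); rewrite qE => ->; rewrite mul0r.
have qt t : q.[t] = q1.[t] * (t - r) by rewrite qE hornerM hornerXsubC.
have [lt_ra|le_ar] := ltP r alpha.
  have q1_gt0 : positive_on q1.
    move=> t /[dup] t_ab /andP[le_at _]; move: (q_gt0 _ t_ab).
    by rewrite qt pmulr_lgt0 // subr_gt0 (lt_le_trans lt_ra).
  by rewrite qE pevalM; apply: posM (IHn _ size_q1 q1_gt0) (pos_XsubC (ltW lt_ra)).
have lt_br : beta < r.
  rewrite ltNge; apply: contraTN qr => le_rb.
  by rewrite rootE gt_eqF // q_gt0 // le_ar.
have q1_gt0 : positive_on (- q1).
  move=> t /[dup] t_ab /andP[_ le_tb]; move: (q_gt0 _ t_ab).
  by rewrite qt hornerN -mulrNN pmulr_lgt0 // oppr_gt0 subr_lt0 (le_lt_trans le_tb).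
have size_Nq1 : (size (- q1) <= n)%N by rewrite size_polyN.
have -> : q = - q1 * (r%:P - 'X) by rewrite qE mulNr -mulrN opprB.
by rewrite pevalM; apply: posM (IHn _ size_Nq1 q1_gt0) (pos_CsubX (ltW lt_br)).
Qed.

Let pos_peval_rootfree n q :
  (forall q', (size q' <= n)%N -> positive_on q' -> pos f (peval q' f)) ->
  (size q <= n.+1)%N -> (1 < size q)%N -> (forall r, ~~ root q r) ->
  positive_on q -> pos f (peval q f).
Proof.
move=> IHn size_q size_q_gt1 no_root q_gt0.
have [a [b [d [b_neq0 qE]]]] := rootfree_quadratic_factor no_root size_q_gt1.
have m_gt0 t : 0 < (('X - a%:P) ^+ 2 + (b ^+ 2)%:P : {poly R}).[t].
  rewrite !hornerE; apply: ltr_wpDl; first exact: sqr_ge0.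
  by rewrite lt_def sqrf_eq0 b_neq0 sqr_ge0.
have d_gt0 : positive_on d.
  by move=> t t_ab; move: (q_gt0 _ t_ab); rewrite qE hornerM pmulr_lgt0.
have m_neq0 : ('X - a%:P) ^+ 2 + (b ^+ 2)%:P != 0.
  by rewrite -size_poly_eq0 size_sqr_XsubC_addC.
have size_d : (size d <= n)%N.
  move: size_q; rewrite qE size_mul ?positive_on_neq0 // size_sqr_XsubC_addC.
  by rewrite addn3 ltnS => /ltnW.
by rewrite qE pevalM; apply: posM (IHn _ size_d d_gt0) (pos_sqr_addC a b).
Qed.

(* Lukacs: a polynomial positive on [[alpha, beta]] is a product of linear
   factors positive there and of quadratic factors positive everywhere. *)
Lemma pos_peval q : positive_on q -> pos f (peval q f).
Proof.
elim: (size q) {-2}q (leqnn (size q)) => [|n IHn] {}q size_q q_gt0.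
  by move: (positive_on_neq0 q_gt0); rewrite -(size_poly_eq0 q) -leqn0 size_q.
have [size_q1|size_q_gt1] := leqP (size q) 1.
  rewrite [q]size1_polyC // pevalC; apply/pos_real_alg/ltW.
  by have := q_gt0 _ in_ab; rewrite {1}[q]size1_polyC // hornerC.
have [[r qr]|no_root] := pselect (exists r, root q r).
  exact: pos_peval_root IHn size_q qr q_gt0.
apply: pos_peval_rootfree IHn size_q size_q_gt1 _ q_gt0 => r.
by apply/negP => qr; apply: no_root; exists r.
Qed.

End PosPeval.

Section FunctionalCalculus.
Context {R : realType} {A : cstar_algebra R}.
Implicit Types (h : R -> R) (g : A).

Lemma cfcP h g :
  (exists p : nat -> {poly R},
    (forall e : R, 0 < e -> exists N, forall k, (N <= k)%N ->
       forall t, `|t| <= cs_norm g -> `|h t - (p k).[t]| < e)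
    /\ cs_cvg (fun k => peval (p k) g) (cfc h g))
  \/ cfc h g = 0.
Proof.
rewrite /cfc; set P := (X in xget 0 X).
case: (pselect (exists l, P l)) => [ex_l|no_l]; [left | right].
  by have [p [unif lim_p]] := xgetPex 0 ex_l; exists p.
by rewrite xgetPN // => l Pl; apply: no_l; exists l.
Qed.

Lemma cfc_self_adjoint h g : self_adjoint g -> self_adjoint (cfc h g).
Proof.
move=> sa_g; case: (cfcP h g) => [[p [_ lim_p]]|->]; last exact: raddf0.
by apply: cs_cvg_self_adjoint lim_p _ => k; apply: peval_self_adjoint.
Qed.

Lemma cfc_poly_approx h g (e : R) : (forall t, 0 <= h t) -> 0 < e ->
  exists p : {poly R}, (forall t, `|t| <= cs_norm g -> p.[t] <= h t + e)
    /\ cs_norm (cfc h g - peval p g) < e.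
Proof.
move=> h_ge0 e_gt0; case: (cfcP h g) => [[p [unif lim_p]]|->].
  have [N1 HN1] := unif e e_gt0; have [N2 HN2] := lim_p e e_gt0.
  exists (p (maxn N1 N2)); split; last by rewrite cs_distC HN2 ?leq_maxr.
  by move=> t /(HN1 _ (leq_maxl N1 N2) t)/ltr_distlCDr/ltW.
exists 0; split=> [t _|]; first by rewrite horner0 addr_ge0 ?h_ge0 ?ltW.
by rewrite peval_horner rmorph0 subrr cs_norm0.
Qed.

End FunctionalCalculus.

Section Chi.
Variable R : realType.
Implicit Types (d t : R).

Lemma chi_ge0 d t : 0 < d -> 0 <= chi d t.
Proof.
move=> d_gt0; rewrite /chi; case: ifP => // _.
by case: ltP => // le_td; apply: divr_ge0; lra.
Qed.

Lemma chi_le1 d t : 0 < d -> chi d t <= 1.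
Proof.
move=> d_gt0; rewrite /chi; case: ltP => // le_t.
by case: ifP => // _; rewrite ler_pdivrMr; lra.
Qed.

Lemma chi_eq0 d t : 0 < d -> d < `|t| -> chi d t = 0.
Proof. by move=> d_gt0 lt_dt; rewrite /chi lt_dt; case: ltP => //; lra. Qed.

Lemma natr_dist_ge1 (i j : nat) : i != j -> 1 <= `|i%:R - j%:R : R|.
Proof.
move=> neq_ij; wlog lt_ij : i j neq_ij / (i < j)%N.
  move=> le_dist; case: (ltngtP i j) => [/le_dist|/le_dist|eq_ij]; first exact.
    by rewrite distrC; apply; rewrite eq_sym.
  by rewrite eq_ij eqxx in neq_ij.
have le_ij := ltnW lt_ij.
rewrite distrC -natrB // ger0_norm ?ler0n // ler1n subn_gt0 //.
Qed.

(* The supports of the [chi (eta / 4) (_ + i * eta)] are pairwise disjoint. *)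
Lemma sum_chi_shift_le1 n (eta t : R) : 0 < eta ->
  \sum_(i < n) chi (eta / 4) (t + i%:R * eta) <= 1.
Proof.
move=> eta_gt0; have d_gt0 : 0 < eta / 4 by lra.
have [[i0 near_i0]|far] := pselect (exists i0 : 'I_n, `|t + i0%:R * eta| <= eta / 4).
  rewrite (bigD1 i0) //= big1 ?addr0 ?chi_le1 // => j /= ji0.
  apply: chi_eq0 => //; rewrite ltNge; apply/negP => near_j.
  have dist : `|(j%:R - i0%:R) * eta| <= eta / 2.
    have -> : (j%:R - i0%:R) * eta = (t + j%:R * eta) - (t + i0%:R * eta) by ring.
    by apply: le_trans (ler_normB _ _) _; lra.
  have := natr_dist_ge1 ji0; rewrite -(ler_pM2r eta_gt0) mul1r.
  by rewrite normrM (gtr0_norm eta_gt0) in dist; lra.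
rewrite big1 ?ler01 // => i _; apply: chi_eq0 => //; rewrite ltNge.
by apply/negP => near_i; apply: far; exists i.
Qed.

End Chi.

Section States.
Context {R : realType} {A : cstar_algebra R}.
Variable tau : A -> R[i].
Hypotheses (tauD : forall x y, tau (x + y) = tau x + tau y)
  (tauZ : forall c x, tau (c *: x) = c * tau x)
  (tau_ge0 : forall x, 0 <= tau (cs_star x * x))
  (tau1 : tau 1 = 1).

Let tau_linear : linear_for *%R tau.
Proof. by move=> c x y; rewrite tauD tauZ. Qed.

HB.instance Definition _ := GRing.isLinear.Build R[i] A R[i] *%R tau tau_linear.

Lemma state_real_alg r : tau (real_alg r) = r%:C.
Proof. by rewrite real_algE tauZ tau1 mulr1. Qed.

Lemma state_sq_ge0 y : self_adjoint y -> 0 <= tau (y * y).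
Proof. by move=> sa_y; rewrite -{1}sa_y. Qed.

Lemma state_le1 h : self_adjoint h -> cs_norm h < 1 -> tau h <= 1.
Proof.
move=> sa_h lt_h; have [y [sa_y yy _]] := cs_sqrt_one_sub sa_h (lexx _) lt_h.
by have := state_sq_ge0 sa_y; rewrite yy raddfB /= tau1 subr_ge0.
Qed.

Lemma state_le_norm h : self_adjoint h -> tau h <= (cs_norm h)%:C.
Proof.
move=> sa_h; apply: lec_addgt0P => e e_gt0.
set a := cs_norm h + e; have a_gt0 : 0 < a by rewrite ltr_pwDr ?cs_norm_ge0.
have -> : h = a%:C *: (a^-1%:C *: h).
  by rewrite scalerA -rmorphM mulfV ?gt_eqF // rmorph1 scale1r.
rewrite tauZ -[a%:C in leRHS]mulr1; apply: ler_wpM2l; first by rewrite ler0c ltW.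
apply: state_le1; first by rewrite /self_adjoint cs_star_real_scale sa_h.
rewrite cs_normZr ger0_norm ?invr_ge0 ?(ltW a_gt0) // mulrC ltr_pdivrMr // mul1r.
by rewrite ltr_pwDr.
Qed.

Variable f : A.

Lemma state_sos_ge0 x : sos f x -> 0 <= tau x.
Proof.
move=> [s [Hs ->]]; rewrite linear_sum big_seq; apply: sumr_ge0 => y /Hs[_ sa_y].
exact: state_sq_ge0.
Qed.

Lemma state_pos_ge0 x : pos f x -> 0 <= tau x.
Proof.
move=> [_ sa_x appr_x]; rewrite -oppr_le0 -[0]/(0%:C); apply: lec_addgt0P => e e_gt0.
have [x' sx' lt_x] := appr_x e e_gt0.
have sa_xx' : self_adjoint (x' - x).
  by rewrite /self_adjoint raddfB /= sa_x (sos_self_adjoint sx').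
have := state_le_norm sa_xx'; rewrite raddfB /= cs_distC add0r => le_x.
apply: (@le_trans _ _ (tau x' - tau x)).
  by rewrite lerDr; apply: state_sos_ge0 sx'.
by apply: le_trans le_x _; rewrite lecR ltW.
Qed.

Lemma state_peval_le (alpha beta K : R) q : self_adjoint f -> alpha <= beta ->
  pos f (f - real_alg alpha) -> pos f (real_alg beta - f) ->
  (forall t, alpha <= t <= beta -> q.[t] <= K) -> tau (peval q f) <= K%:C.
Proof.
move=> sa_f le_ab pos_fa pos_bf le_q; apply: lec_addgt0P => e e_gt0.
have : pos f (peval ((K + e)%:P - q) f).
  apply: (pos_peval sa_f le_ab pos_fa pos_bf) => t /le_q.
  by rewrite hornerD hornerN hornerC subr_gt0; lra.
by move/state_pos_ge0; rewrite pevalB pevalC raddfB /= state_real_alg subr_ge0.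
Qed.

Section ShiftedSum.
Variables (n : nat) (c : 'I_n.+1 -> R).
Hypothesis sa_f : self_adjoint f.

Local Notation g i := (f + real_alg (c i)).

Let bicomm_g i : bicomm f (g i).
Proof. exact/bicommD/bicomm_real_alg/bicomm_id. Qed.

Let sa_g i : self_adjoint (g i).
Proof. by rewrite /self_adjoint cs_star_add sa_f cs_star_real_alg. Qed.

(* A substitute for the unknown spectrum of [f], read off the norms of the
   [g i] so that [t + c i] stays where the polynomial approximations hold. *)
Lemma common_interval : exists alpha beta, [/\ alpha <= beta,
  pos f (f - real_alg alpha), pos f (real_alg beta - f) &
  forall i t, alpha <= t <= beta -> `|t + c i| <= cs_norm (g i)].
Proof.
pose lo i := - cs_norm (g i) - c i; pose hi i := cs_norm (g i) - c i.
have [i0 _ max_lo] := Order.TotalTheory.arg_maxP lo (isT : xpredT ord0).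
have [i1 _ min_hi] := Order.TotalTheory.arg_minP hi (isT : xpredT ord0).
have pos_fa : pos f (f - real_alg (lo i0)).
  rewrite /lo !rmorphB opprB rmorphN opprK addrA addrC.
  exact: pos_add_norm (bicomm_g i0) (sa_g i0) (lexx _).
have pos_bf : pos f (real_alg (hi i1) - f).
  rewrite /hi rmorphB addrAC -addrA -opprD.
  exact: pos_sub_norm (bicomm_g i1) (sa_g i1) (lexx _).
exists (lo i0), (hi i1); split=> // [|i t /andP[le_at le_tb]].
  have := state_pos_ge0 (posD pos_fa pos_bf).
  by rewrite addrC addrA subrK -rmorphB state_real_alg ler0c subr_ge0.
have ge_lo : lo i <= lo i0 := max_lo i isT.
have le_hi : hi i1 <= hi i := min_hi i isT.
rewrite /lo /hi in ge_lo le_hi le_at le_tb.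
by rewrite ler_norml; apply/andP; split; lra.
Qed.

Variables (h : 'I_n.+1 -> R -> R) (M : R).
Hypotheses (h_ge0 : forall i t, 0 <= h i t)
  (sum_h_le : forall t, \sum_i h i (t + c i) <= M).

Lemma sum_state_cfc_le : \sum_i tau (cfc (h i) (g i)) <= M%:C.
Proof.
apply: lec_addgt0P => e e_gt0.
have [alpha [beta [le_ab pos_fa pos_bf in_ab]]] := common_interval.
pose th := e / 2 / n.+1%:R.
have th_gt0 : 0 < th by rewrite /th !divr_gt0 // ltr0n.
have nth : th *+ n.+1 = e / 2 by rewrite -mulr_natl /th mulrC divfK ?pnatr_eq0.
have [p Hp] := choice (fun i => cfc_poly_approx (g i) (h_ge0 i) th_gt0).
pose Q := \sum_i (p i \Po ('X + (c i)%:P)).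
have tau_Q : tau (peval Q f) <= (M + e / 2)%:C.
  apply: state_peval_le sa_f le_ab pos_fa pos_bf _ => t t_ab.
  rewrite horner_sum -nth.
  apply: (@le_trans _ _ (\sum_i (h i (t + c i) + th))).
    apply: ler_sum => i _; rewrite horner_comp hornerD hornerX hornerC.
    exact/(Hp i).1/in_ab.
  by rewrite big_split /= sumr_const card_ord lerD2r.
have le_i i : tau (cfc (h i) (g i)) <= tau (peval (p i) (g i)) + th%:C.
  rewrite -lerBlDl -raddfB /=; apply: le_trans (state_le_norm _) _.
    have sa_cfc := cfc_self_adjoint (h i) (sa_g i).
    have sa_p := peval_self_adjoint (p i) (sa_g i).
    by rewrite /self_adjoint raddfB /= sa_cfc sa_p.
  by rewrite lecR ltW // (Hp i).2.
apply: le_trans (ler_sum _ (fun i _ => le_i i)) _.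
rewrite big_split /= sumr_const card_ord.
have -> : \sum_i tau (peval (p i) (g i)) = tau (peval Q f).
  by rewrite peval_sum linear_sum; apply: eq_bigr => i _; rewrite peval_shift.
apply: le_trans (lerD tau_Q (lexx _)) _.
by rewrite -rmorphMn -rmorphD lecR nth; lra.
Qed.

End ShiftedSum.

End States.

Theorem corollary3p9 (R : realType) (A : cstar_algebra R) (f : A)
    (hf : self_adjoint f) (eps : R) (heps : 0 < eps) :
  exists (n : nat) (delta : R) (fs : 'I_n -> A),
    [/\ (0 < n)%N, 0 < delta,
        forall i : 'I_n, self_adjoint (fs i) /\ cs_norm (f - fs i) < eps &
        forall tau : A -> R[i], tracial_state tau ->
          (n%:R)^-1 * \sum_(i < n) tau (cfc (chi delta) (fs i)) < ((eps)%:C)%C].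
Proof.
pose m := Num.Def.archi_bound eps^-1.
have lt_m : eps^-1 < m%:R by apply: archi_boundP; rewrite invr_ge0 ltW.
have n_gt0 : (0 : R) < m.+1%:R by rewrite ltr0n.
have lt_n : m.+1%:R^-1 < eps.
  by rewrite invf_plt ?posrE //; apply: lt_trans lt_m _; rewrite ltr_nat.
pose eta := eps / m.+1%:R.
have eta_gt0 : 0 < eta by rewrite divr_gt0.
have delta_gt0 : 0 < eta / 4 by rewrite divr_gt0.
exists m.+1, (eta / 4), (fun i : 'I_m.+1 => f + real_alg (i%:R * eta)).
split=> //.
- move=> i; split; first by rewrite /self_adjoint cs_star_add hf cs_star_real_alg.
  rewrite opprD addrA subrr add0r cs_normN; apply: le_lt_trans (cs_norm_real_alg _) _.
  rewrite ger0_norm; last exact: mulr_ge0 (ler0n _ _) (ltW eta_gt0).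
  have -> : eps = m.+1%:R * eta by rewrite /eta mulrC divfK ?lt0r_neq0.
  by rewrite ltr_pM2r // ltr_nat.
- move=> tau [tauD tauZ tau_ge0 tau1 _].
  have := sum_state_cfc_le tauD tauZ tau_ge0 tau1 (c := fun i : 'I_m.+1 => i%:R * eta)
    hf (fun _ t => chi_ge0 t delta_gt0) (fun t => sum_chi_shift_le1 _ t eta_gt0).
  move=> le_sum; apply: le_lt_trans (ler_wpM2l _ le_sum) _.
    by rewrite invr_ge0 ler0n.
  by rewrite mulr1 -(rmorph_nat (real_complex R)) -fmorphV ltcR.
Qed.
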